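(* In the setting described in the context, assume $G$ satisfies Condition 1. Then $$\sum_{t=0}^{\infty}\alpha(t)\sum_{j=1}^{n-\phi}\pi_j(t+1)\,|y(t)-x_j(t)|<\infty.$$
   Context: A synchronous system of $n$ agents communicates over a directed graph $G=(\mathcal{V},\mathcal{E})$, $\mathcal{V}=\{1,\dots,n\}$, without self-loops; $N_i^-=\{j:(j,i)\in\mathcal{E}\}$. At most $f$ agents are Byzantine faulty (may send arbitrary, possibly inconsistent values); $\mathcal{F}$ is the set of faulty agents, $\phi=|\mathcal{F}|\le f$, non-faulty agents indexed $1,\dots,n-\phi$. Assignment matrix $\mathbf{A}\in\mathbb{R}^{k\times n}$: nonnegative entries, columns summing to $1$; agent $i$ holds $g_i=\sum_{j=1}^k\mathbf{A}_{ji}h_j$ for admissible (convex, $L$-Lipschitz, nonempty compact argmin) $h_1,\dots,h_k:\mathbb{R}\to\mathbb{R}$. Sparsity parameter $sp(\mathbf{A})$: smallest $s$ such that the sum of any $s$ columns of $\mathbf{A}$ is component-wise positive ($n+1$ if the sum of all columns is not). Reduced graph w.r.t. $\mathcal{F}$: subgraph of $G$ obtained by removing the nodes of $\mathcal{F}$ with their edges and then up to $f$ additional incoming edges at each remaining node; $R_{\mathcal{F}}$ the set of reduced graphs, $\tau=|R_{\mathcal{F}}|$. Source component: set of nodes each having a directed path to every other node of the graph. Condition 1: for every $\mathcal{F}'\subseteq\mathcal{V}$ with $|\mathcal{F}'|\le f$, every reduced graph w.r.t. $\mathcal{F}'$ has a source component with at least $\max\{f+1,sp(\mathbf{A})\}$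 nodes. Step sizes: $\alpha(t)\ge0$ with $\alpha(t+1)\le\alpha(t)$, $\sum_t\alpha(t)=\infty$, $\sum_t\alpha^2(t)<\infty$. Algorithm 2: arbitrary $x_i(0)$; in iteration $t\ge1$ non-faulty agent $i$ sends $x_i(t-1)$ to all out-neighbors, receives $|N_i^-|$ values (default for missing), discards the $f$ smallest and $f$ largest, lets $N_i^*(t)$ be the senders of the remaining values with values $w_j$, sets $w_i=x_i(t-1)$, and updates $x_i(t)=\frac{1}{|N_i^*(t)|+1}\sum_{j\in\{i\}\cup N_i^*(t)}w_j-\alpha(t-1)d_i(t-1)$, $d_i(t-1)$ a subgradient of $g_i$ at $x_i(t-1)$. Known facts: with $\mathbf{x}(t)$ the non-faulty states and $\mathbf{d}(t)=(d_1(t),\dots,d_{n-\phi}(t))$, $\mathbf{x}(t+1)=\mathbf{M}(t)\mathbf{x}(t)-\alpha(t)\mathbf{d}(t)$ with row-stochastic $\mathbf{M}(t)$, and there is $0<\beta<1$ with $\mathbf{M}(t)\ge\beta\mathbf{H}(t)$ entrywise for the adjacency matrix $\mathbf{H}(t)$ (including diagonal ones) of some reduced graph in $R_{\mathcal{F}}$. Let $\Phi(t,r)=\mathbf{M}(t)\cdots\mathbf{M}(r)$ for $t\ge r$, $\Phi(t,t+1)=I$, $\nu=\tau(n-\phi)$, $\gamma=1-\beta^\nu$. Under Condition 1, for each $r$, $\lim_{t\to\infty}\Phi(t,r)=\mathbf{1}\pi(r)$ for a stochastic row vector $\pi(r)=(\pi_1(r),\dots,\pi_{n-\phi}(r))$,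 and $|\Phi_{ij}(t,r)-\pi_j(r)|\le\gamma^{\lceil (t-r+1)/\nu\rceil}$ for all $t\ge r$. Define $y(t)=\sum_{j=1}^{n-\phi}\pi_j(0)x_j(0)-\sum_{r=1}^{t}\alpha(r-1)\sum_{j=1}^{n-\phi}\pi_j(r)d_j(r-1)$. *)

From HB Require Import structures.
From mathcomp Require Import all_boot all_order all_algebra.
From mathcomp Require Import all_classical all_reals all_analysis.
Set Implicit Arguments. Unset Strict Implicit. Unset Printing Implicit Defensive.
Import Order.TTheory GRing.Theory Num.Theory.
Import numFieldNormedType.Exports.
Local Open Scope classical_set_scope.
Local Open Scope ring_scope.

Section Defs.
Variable R : realType.

Definition convex_fun (h : R -> R) : Prop :=
  forall (x y l : R), 0 <= l -> l <= 1 ->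
    h (l * x + (1 - l) * y) <= l * h x + (1 - l) * h y.

Definition lipschitz (L : R) (h : R -> R) : Prop :=
  forall x y : R, `|h x - h y| <= L * `|x - y|.

Definition argmin (h : R -> R) : set R := [set x | forall z, h x <= h z].

Definition admissible (L : R) (h : R -> R) : Prop :=
  [/\ convex_fun h, lipschitz L h, argmin h !=set0 & compact (argmin h)].

Definition assignment_matrix (k n : nat) (A : 'M[R]_(k, n)) : Prop :=
  (forall j i, 0 <= A j i) /\ (forall i, \sum_(j < k) A j i = 1).

Definition subgradient (g : R -> R) (x d : R) : Prop :=
  forall z, g x + d * (z - x) <= g z.

Definition row_stochastic (m : nat) (M : 'M[R]_m) : Prop :=
  (forall i j, 0 <= M i j) /\ (forall i, \sum_(j < m) M i j = 1).

Definition stochastic_rowvec (m : nat) (p : 'rV[R]_m) : Prop :=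
  (forall j, 0 <= p 0 j) /\ \sum_(j < m) p 0 j = 1.

Fixpoint phi_aux (m : nat) (M : nat -> 'M[R]_m) (r k : nat) : 'M[R]_m :=
  match k with
  | 0 => 1%:M
  | k'.+1 => M (r + k')%N *m phi_aux M r k'
  end.

(* Phi(t, r) = M(t) ... M(r) for t >= r, and Phi(r-1, r) = I *)
Definition Phi (m : nat) (M : nat -> 'M[R]_m) (t r : nat) : 'M[R]_m :=
  phi_aux M r (t.+1 - r).

End Defs.

Definition ceildiv (a b : nat) : nat := ((a + b.-1) %/ b)%N.

From Pilot Require Import Defs.
From HB Require Import structures.
From mathcomp Require Import all_boot all_order all_algebra.
From mathcomp Require Import all_classical all_reals all_analysis.
From mathcomp Require Import ring lra zify.
Import Order.TTheory GRing.Theory Num.Theory.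
Import numFieldNormedType.Exports.
Set Implicit Arguments. Unset Strict Implicit. Unset Printing Implicit Defensive.
Local Open Scope classical_set_scope.
Local Open Scope ring_scope.

(* Unrolling the recursion gives
     x_j(t) = sum_l Phi(t-1,0)_jl x_l(0) - sum_(r <= t) alpha(r-1) sum_l Phi(t-1,r)_jl d_l(r-1),
   which differs from y(t) only in that the rows pi(r) are replaced by rows of Phi(t-1,r).
   Choosing rho < 1 with gamma <= rho^nu turns the bound gamma^(ceil((t-r+1)/nu)) into
   rho^(t-r); with |d| <= L the tracking error |y(t) - x_j(t)| is then at most
   rho^t sum_l |x_l(0)| + (n-phi) L sum_r alpha(r-1) rho^(t-r).  As alpha is nonincreasing,
   alpha(t) times this bound is dominated by a geometric sequence plus the convolution of
   alpha^2 with rho^t, and both are summable. *)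

Lemma bernoulli_ineq (R : realFieldType) (c : R) (n : nat) :
  0 <= c -> c <= 1 -> 1 - n%:R * c <= (1 - c) ^+ n.
Proof.
move=> c0 c1; elim: n => [|n IH]; first by rewrite expr0 mul0r subr0.
rewrite exprS -natr1.
have c1' : 0 <= 1 - c by lra.
have : (1 - c) * (1 - n%:R * c) <= (1 - c) * (1 - c) ^+ n by rewrite ler_wpM2l.
have : 0 <= n%:R * c * c by rewrite !mulr_ge0.
nra.
Qed.

Lemma exists_contraction_rate (R : realFieldType) (gamma : R) (nu : nat) :
  0 <= gamma < 1 -> (0 < nu)%N -> exists2 rho : R, 0 <= rho < 1 & gamma <= rho ^+ nu.
Proof.
move=> /andP[g0 g1] nu0; set c := (1 - gamma) / nu%:R.
have nu1 : 1 <= nu%:R :> R by rewrite ler1n.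
have c0 : 0 < c by rewrite divr_gt0 ?subr_gt0 //; lra.
have c1 : c <= 1 - gamma.
  by rewrite ler_pdivrMr ?(lt_le_trans ltr01 nu1) // ler_peMr // subr_ge0 ltW.
exists (1 - c); first by apply/andP; split; lra.
apply: le_trans (bernoulli_ineq nu (ltW c0) _); last by lra.
by rewrite /c mulrCA mulfV ?mulr1 ?pnatr_eq0 -?lt0n //; lra.
Qed.

Lemma leq_mul_ceildiv a b : (0 < b)%N -> (a <= b * ceildiv a b)%N.
Proof.
move=> b0; rewrite /ceildiv.
have := divn_eq (a + b.-1) b; have := ltn_pmod (a + b.-1) b0.
move: ((a + b.-1) %/ b)%N ((a + b.-1) %% b)%N => q s; lia.
Qed.

Lemma stochastic_rowvec_bounds (R : realType) m (p : 'rV[R]_m) j :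
  stochastic_rowvec p -> 0 <= p 0 j <= 1.
Proof.
move=> [p0 p1]; rewrite p0 /= -p1 (bigD1 j) //= lerDl.
by apply: sumr_ge0 => i _; apply: p0.
Qed.

Lemma stochastic_rowvec_dim_gt0 (R : realType) m (p : 'rV[R]_m) :
  stochastic_rowvec p -> (0 < m)%N.
Proof. by case: m p => [|m] // p [_]; rewrite big_ord0 => /eqP; rewrite eq_sym oner_eq0. Qed.

Lemma subgradient_norm_le (R : realType) (g : R -> R) (L x dg : R) :
  Defs.lipschitz L g -> subgradient g x dg -> `|dg| <= L.
Proof.
move=> Lg sg.
have := sg (x + 1); have := sg (x - 1).
have := Lg (x + 1) x; have := Lg (x - 1) x.
have := ler_norm (g (x + 1) - g x); have := ler_norm (g (x - 1) - g x).
rewrite [x + 1]addrC [x - 1]addrC !addrK normrN normr1 !mulr1 mulrN1.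
by move=> *; rewrite ler_norml; apply/andP; split; lra.
Qed.

Lemma lipschitz_assignment_comb (R : realType) k n (A : 'M[R]_(k, n))
    (h : 'I_k -> R -> R) L i :
  assignment_matrix A -> (forall j, Defs.lipschitz L (h j)) ->
  Defs.lipschitz L (fun z => \sum_(j < k) A j i * h j z).
Proof.
move=> [A0 A1] hL a b /=.
rewrite -sumrB; apply: le_trans (ler_norm_sum _ _ _) _.
rewrite -(mul1r (L * _)) -(A1 i) mulr_suml; apply: ler_sum => j _.
rewrite -mulrBr normrM ger0_norm //.
by rewrite ler_wpM2l //; apply: hL.
Qed.

Lemma norm_sum_mul_le (R : numDomainType) m (a v : 'I_m -> R) (e : R) :
  (forall l, `|a l| <= e) -> `|\sum_(l < m) a l * v l| <= e * \sum_(l < m) `|v l|.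
Proof.
move=> ae; apply: le_trans (ler_norm_sum _ _ _) _.
rewrite mulr_sumr; apply: ler_sum => l _.
by rewrite normrM; apply: ler_wpM2r (ae l).
Qed.

Lemma conv_partial_sum_le (R : realFieldType) (a : nat -> R) (rho : R) (N : nat) :
  (forall t, 0 <= a t) -> 0 <= rho < 1 ->
  \sum_(0 <= t < N) \sum_(1 <= r < t.+1) a r.-1 * rho ^+ (t - r)
    <= (\sum_(0 <= t < N) a t) / (1 - rho).
Proof.
move=> a0 /andP[r0 r1].
set v := fun t => \sum_(1 <= r < t.+1) a r.-1 * rho ^+ (t - r).
have v0 t : 0 <= v t by apply: sumr_ge0 => r _; rewrite mulr_ge0 ?exprn_ge0.
have vS t : v t.+1 = rho * v t + a t.
  rewrite /v big_nat_recr //= subnn expr0 mulr1 mulr_sumr; congr (_ + _).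
  apply: eq_big_nat => r /andP[_ rt].
  by rewrite subSn // exprS mulrCA.
have sum_vS : \sum_(0 <= t < N.+1) v t = rho * \sum_(0 <= t < N) v t + \sum_(0 <= t < N) a t.
  rewrite big_nat_recl // [v 0%N]big_geq // add0r.
  by under eq_bigr do rewrite vS; rewrite big_split /= -mulr_sumr.
have : \sum_(0 <= t < N) v t <= \sum_(0 <= t < N.+1) v t.
  by rewrite big_nat_recr //= lerDl.
rewrite ler_pdivlMr ?subr_gt0 // sum_vS; nra.
Qed.

Lemma is_cvg_series_conv (R : realType) (a : nat -> R) (rho : R) :
  (forall t, 0 <= a t) -> 0 <= rho < 1 -> cvgn (series a) ->
  cvgn (series (fun t => \sum_(1 <= r < t.+1) a r.-1 * rho ^+ (t - r))).
Proof.
move=> a0 /andP[r0 r1] cva.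
have a_incr : nondecreasing_seq (series a).
  by apply: nondecreasing_series => t _ _; apply: a0.
apply: nondecreasing_is_cvgn.
  apply: nondecreasing_series => t _ _.
  by apply: sumr_ge0 => r _; rewrite mulr_ge0 ?exprn_ge0.
exists (limn (series a) / (1 - rho)) => _ [N _ <-].
apply: le_trans (conv_partial_sum_le N a0 _) _; first by rewrite r0.
rewrite ler_pM2r ?invr_gt0 ?subr_gt0 //.
exact: nondecreasing_cvgn_le.
Qed.

Lemma phi_auxS (R : realType) m (M : nat -> 'M[R]_m) r t : (r <= t)%N ->
  phi_aux M r (t.+1 - r) = M t *m phi_aux M r (t - r).
Proof. by move=> rt; rewrite subSn //= subnKC. Qed.

Lemma phi_aux_error_le (R : realType) m (M : nat -> 'M[R]_m) (pi : nat -> 'rV[R]_m)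
    (gamma rho : R) (nu : nat) :
  (forall r, stochastic_rowvec (pi r)) -> 0 <= rho <= 1 ->
  0 <= gamma <= rho ^+ nu -> (0 < nu)%N ->
  (forall t r i j, (r <= t)%N ->
     `|Phi M t r i j - pi r 0 j| <= gamma ^+ ceildiv (t - r).+1 nu) ->
  forall t r j l, (r <= t)%N ->
    `|pi r 0 l - phi_aux M r (t - r) j l| <= rho ^+ (t - r).
Proof.
move=> pi_st /andP[r0 r1] /andP[g0 g1] nu0 HPhi t r j l.
rewrite leq_eqVlt => /orP[/eqP <-|].
  rewrite subnn expr0 /= mxE.
  have /andP[p0 p1] := stochastic_rowvec_bounds l (pi_st r).
  by case: (j == l); rewrite /= ?mulr1n ?mulr0n ler_norml; apply/andP; split; lra.
case: t => // t rt.
apply: le_trans (_ : (rho ^+ nu) ^+ ceildiv (t - r).+1 nu <= _).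
  by rewrite distrC; apply: le_trans (HPhi t r j l rt) _; rewrite lerXn2r ?nnegrE ?exprn_ge0.
rewrite -exprM ler_wiXn2l //.
have := leq_mul_ceildiv (t - r).+1 nu0; lia.
Qed.

(* [phi_aux M r (t - r)] is Phi(t-1, r). *)
Lemma phi_aux_closed_form (R : realType) m (M : nat -> 'M[R]_m) (alpha : nat -> R)
    (x d : nat -> 'I_m -> R) :
  (forall t, x t.+1 = fun i => \sum_(l < m) M t i l * x t l - alpha t * d t i) ->
  forall t i, x t i = \sum_(l < m) phi_aux M 0 t i l * x 0%N l
    - \sum_(1 <= r < t.+1) alpha r.-1 * \sum_(l < m) phi_aux M r (t - r) i l * d r.-1 l.
Proof.
move=> x_rec; elim=> [|t IH] i.
  rewrite big_geq // subr0 (bigD1 i) //= mxE eqxx mul1r big1 ?addr0 // => l.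
  by rewrite mxE eq_sym => /negPf ->; rewrite mul0r.
rewrite x_rec; under eq_bigr do rewrite IH mulrBr.
rewrite sumrB big_nat_recr //= subnn opprD addrA.
have -> : \sum_(l < m) phi_aux M t.+1 0 i l * d t l = d t i.
  rewrite /= (bigD1 i) //= mxE eqxx mul1r big1 ?addr0 // => l.
  by rewrite mxE eq_sym => /negPf ->; rewrite mul0r.
congr (_ - _ - _).
  rewrite add0n; under eq_bigr do rewrite mulr_sumr.
  rewrite exchange_big /=; apply: eq_bigr => l _.
  by rewrite mxE mulr_suml; apply: eq_bigr => j _; rewrite mulrA.
under eq_bigr do rewrite mulr_sumr.
rewrite exchange_big /=; apply: eq_big_nat => r /andP[r1 rt].
rewrite phi_auxS; last by lia.
under eq_bigr do rewrite mulrCA.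
rewrite -mulr_sumr; congr (_ * _).
under [RHS]eq_bigr => l _ do rewrite mxE mulr_suml.
rewrite [RHS]exchange_big /=; apply: eq_bigr => j _.
by rewrite mulr_sumr; apply: eq_bigr => l _; rewrite mulrA.
Qed.

Section TrackingError.
Variables (R : realType) (m : nat) (M : nat -> 'M[R]_m) (pi : nat -> 'rV[R]_m).
Variables (alpha : nat -> R) (x d : nat -> 'I_m -> R) (L rho : R).
Hypothesis alpha_ge0 : forall t, 0 <= alpha t.
Hypothesis alpha_noninc : forall t, alpha t.+1 <= alpha t.
Hypothesis x_rec :
  forall t, x t.+1 = fun i => \sum_(l < m) M t i l * x t l - alpha t * d t i.
Hypothesis d_le : forall t i, `|d t i| <= L.
Hypothesis pi_stoch : forall r, stochastic_rowvec (pi r).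
Hypotheses (rho_ge0 : 0 <= rho) (rho_lt1 : rho < 1).
Hypothesis phi_aux_err : forall t r j l, (r <= t)%N ->
  `|pi r 0 l - phi_aux M r (t - r) j l| <= rho ^+ (t - r).

Let y t := \sum_(j < m) pi 0%N 0 j * x 0%N j
  - \sum_(1 <= r < t.+1) alpha r.-1 * \sum_(j < m) pi r 0 j * d r.-1 j.
Let X0 := \sum_(l < m) `|x 0%N l|.
Let K := m%:R * L.

Lemma y_sub_x t j : y t - x t j =
  \sum_(l < m) (pi 0%N 0 l - phi_aux M 0 t j l) * x 0%N l
  - \sum_(1 <= r < t.+1)
      alpha r.-1 * \sum_(l < m) (pi r 0 l - phi_aux M r (t - r) j l) * d r.-1 l.
Proof.
rewrite /y (phi_aux_closed_form x_rec t j).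
under [in RHS]eq_bigr do rewrite mulrBl.
under [in RHS]eq_big_nat => r _ do rewrite (eq_bigr _ (fun l _ => mulrBl _ _ _)) sumrB mulrBr.
by rewrite !sumrB; ring.
Qed.

Lemma K_ge0 : 0 <= K.
Proof.
have m_gt0 := stochastic_rowvec_dim_gt0 (pi_stoch 0).
by rewrite mulr_ge0 // (le_trans _ (d_le 0 (Ordinal m_gt0))).
Qed.

Lemma dist_y_x_le t j : `|y t - x t j| <=
  rho ^+ t * X0 + \sum_(1 <= r < t.+1) alpha r.-1 * (rho ^+ (t - r) * K).
Proof.
rewrite y_sub_x; apply: le_trans (ler_normB _ _) _; apply: lerD.
  by apply: norm_sum_mul_le => l; have := phi_aux_err j l (leq0n t); rewrite subn0.
apply: le_trans (ler_norm_sum _ _ _) _; apply: ler_sum_nat => r /andP[r1 rt].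
rewrite normrM ger0_norm // ler_wpM2l //.
apply: le_trans (norm_sum_mul_le _ (phi_aux_err j ^~ _)) _; first by rewrite -ltnS.
rewrite ler_wpM2l ?exprn_ge0 // /K mulr_natl -[m in L *+ m]card_ord -sumr_const.
by apply: ler_sum => l _.
Qed.

Lemma tracking_term_le t :
  alpha t * \sum_(j < m) pi t.+1 0 j * `|y t - x t j|
  <= alpha 0%N * X0 * rho ^+ t
     + K * \sum_(1 <= r < t.+1) alpha r.-1 ^+ 2 * rho ^+ (t - r).
Proof.
have alpha_le := (nonincreasing_seqP alpha).1 alpha_noninc.
have [pi0 pi1] := pi_stoch t.+1.
apply: le_trans (_ : _ <= alpha t * (rho ^+ t * X0
  + \sum_(1 <= r < t.+1) alpha r.-1 * (rho ^+ (t - r) * K))) _.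
  rewrite ler_wpM2l // -[X in _ <= X]mul1r -pi1 mulr_suml.
  by apply: ler_sum => j _; apply: ler_wpM2l => //; apply: dist_y_x_le.
rewrite mulrDr; apply: lerD.
  have a0t := alpha_le 0%N t (leq0n t).
  have : 0 <= rho ^+ t * X0 by rewrite mulr_ge0 ?exprn_ge0 // sumr_ge0.
  nra.
rewrite mulr_sumr mulr_sumr; apply: ler_sum_nat => r /andP[r1 rt].
have ar : alpha t <= alpha r.-1 by apply: alpha_le; lia.
have : 0 <= alpha r.-1 * (rho ^+ (t - r) * K).
  by rewrite mulr_ge0 // mulr_ge0 ?exprn_ge0 // K_ge0.
nra.
Qed.

Lemma tracking_error_summable :
  cvgn (series (fun t => alpha t ^+ 2)) ->
  cvgn (series (fun t => alpha t * \sum_(j < m) pi t.+1 0 j * `|y t - x t j|)).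
Proof.
move=> alpha2_cvg.
pose w t := \sum_(1 <= r < t.+1) alpha r.-1 ^+ 2 * rho ^+ (t - r).
apply: (@series_le_cvg _ _ (geometric (alpha 0%N * X0) rho + K *: w)).
- move=> t; rewrite mulr_ge0 // sumr_ge0 // => j _.
  by rewrite mulr_ge0 // (andP (stochastic_rowvec_bounds j (pi_stoch _))).1.
- move=> t /=; apply: addr_ge0; first by rewrite !mulr_ge0 ?exprn_ge0 ?sumr_ge0.
  apply: mulr_ge0 K_ge0 _; apply: sumr_ge0 => r _.
  by rewrite mulr_ge0 ?exprn_ge0 ?sqr_ge0.
- exact: tracking_term_le.
apply: is_cvg_seriesD.
  by apply: is_cvg_geometric_series; rewrite ger0_norm.
apply/is_cvg_seriesZ/(@is_cvg_series_conv _ (fun t => alpha t ^+ 2)) => //.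
  by move=> t; apply: sqr_ge0.
by rewrite rho_ge0.
Qed.

End TrackingError.

Theorem lemma8 (R : realType) (n f phi k : nat) (L : R)
  (A : 'M[R]_(k, n)) (h : 'I_k -> R -> R)
  (alpha : nat -> R)
  (x : nat -> 'I_(n - phi) -> R) (d : nat -> 'I_(n - phi) -> R)
  (M : nat -> 'M[R]_(n - phi)) (H : nat -> 'M[R]_(n - phi))
  (pi : nat -> 'rV[R]_(n - phi))
  (beta : R) (tau : nat) :
  (phi <= f)%N ->
  assignment_matrix A ->
  (forall j, admissible L (h j)) ->
  (* step sizes *)
  (forall t, 0 <= alpha t) ->
  (forall t, alpha t.+1 <= alpha t) ->
  series alpha @ \oo --> +oo ->
  cvgn (series (fun t => alpha t ^+ 2)) ->
  (* non-faulty agent i (= agent i of 1..n-phi) holds g_i = sum_j A_ji h_j,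
     d_i(t) is a subgradient of g_i at x_i(t) *)
  (forall t (i : 'I_(n - phi)),
     subgradient (fun z => \sum_(j < k) A j (widen_ord (leq_subr phi n) i) * h j z)
                 (x t i) (d t i)) ->
  (* known facts (consequences of Algorithm 2 and Condition 1) *)
  (forall t, row_stochastic (M t)) ->
  (forall t, x t.+1 = fun i => \sum_(l < n - phi) M t i l * x t l - alpha t * d t i) ->
  (0 < beta < 1) -> (0 < tau)%N ->
  (forall t i j, H t i j = 0 \/ H t i j = 1) ->
  (forall t i, H t i i = 1) ->
  (forall t i j, beta * H t i j <= M t i j) ->
  (forall r, stochastic_rowvec (pi r)) ->
  (forall r i j, (fun t => Phi M t r i j) @ \oo --> pi r 0 j) ->
  (forall t r i j, (r <= t)%N ->
     `|Phi M t r i j - pi r 0 j|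
       <= (1 - beta ^+ (tau * (n - phi))) ^+ ceildiv (t - r).+1 (tau * (n - phi))) ->
  let y := fun t : nat =>
    \sum_(j < n - phi) pi 0%N 0 j * x 0%N j
    - \sum_(1 <= r < t.+1) alpha r.-1 * \sum_(j < n - phi) pi r 0 j * d r.-1 j in
  cvgn (series (fun t =>
    alpha t * \sum_(j < n - phi) pi t.+1 0 j * `|y t - x t j|)).
Proof.
move=> _ HA Hh alpha_ge0 alpha_noninc _ alpha2_cvg Hsg _ x_rec /andP[b0 b1] tau_gt0
  _ _ _ pi_stoch _ HPhi y.
have m_gt0 := stochastic_rowvec_dim_gt0 (pi_stoch 0%N).
have nu_gt0 : (0 < tau * (n - phi))%N by rewrite muln_gt0 tau_gt0.
have gamma_range : 0 <= 1 - beta ^+ (tau * (n - phi)) < 1.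
  by rewrite subr_ge0 exprn_ile1 ?ltW //= ltrBlDr ltrDl exprn_gt0.
have [rho /andP[rho_ge0 rho_lt1] gamma_le] := exists_contraction_rate gamma_range nu_gt0.
have d_le t i : `|d t i| <= L.
  apply: subgradient_norm_le (Hsg t i).
  by apply: lipschitz_assignment_comb => // j; have [] := Hh j.
apply: (tracking_error_summable alpha_ge0 alpha_noninc x_rec d_le pi_stoch
  rho_ge0 rho_lt1 _ alpha2_cvg).
apply: (phi_aux_error_le pi_stoch _ _ nu_gt0 HPhi).
  by rewrite rho_ge0 ltW.
by rewrite gamma_le andbT; case/andP: gamma_range.
Qed.
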